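(* Let $n \ge 1$ and let $v_1,\dots,v_n > 0$. Consider the tit-for-tat dynamic on players $N=\{1,\dots,n\}$ with values $v_1,\dots,v_n$, started from a non-degenerate configuration: $x_i(0)>0$ for all $i$, and $y_{i,j}(0)>0$ for all $i,j$ with $\sum_{j=1}^n y_{i,j}(0)=1$ for each $i$. Let $v^* = \max_{j\in[n]} v_j$. Then for each player $i$ there exist constants $c_i, d_i > 0$ such that $$c_i \cdot (v_i v^* )^{\lfloor t/2\rfloor} \le x_i(t) \le d_i \cdot (v_i v^* )^{\lfloor t/2\rfloor} \quad \text{for all } t \in \mathbb{N}.$$ In particular, $\lim_{t\to\infty} x_i(t) = \infty$ if $v_i > 1/v^*$, $\lim_{t\to\infty} x_i(t) = 0$ if $v_i < 1/v^*$, and $x_i(t)$ stays in a bounded region (bounded above and bounded away from $0$) for all $t$ if $v_i = 1/v^*$.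
   Context: Tit-for-tat dynamic: there are $n$ players; player $i$ produces good $i$, and each unit of good $j$ used as input by any player yields $v_j$ units of that player's own good. At time $t$, player $i$ holds an amount $x_i(t)$ of good $i$ and allocates it according to fractions $y_{i,j}(t)\ge 0$, $\sum_j y_{i,j}(t)=1$ ($y_{i,j}(t)$ is the fraction of good $i$ given to player $j$). At each time $t$: (Exchange) every player $i$ receives $w_{i,j}(t) = y_{j,i}(t)\, x_j(t)$ units of each good $j$; (Production) $x_i(t+1) = \sum_{j=1}^n v_j\, w_{i,j}(t)$; (Fractions update) $y_{i,j}(t+1) = \dfrac{v_j\, w_{i,j}(t)}{x_i(t+1)}$. *)

From HB Require Import structures.
From mathcomp Require Import all_boot all_order all_algebra.
From mathcomp Require Import all_classical all_reals all_analysis.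
Set Implicit Arguments. Unset Strict Implicit. Unset Printing Implicit Defensive.
Import Order.TTheory GRing.Theory Num.Theory.
Local Open Scope ring_scope.

(* State of the tit-for-tat dynamic: amounts x i and fractions y i j
   (fraction of good i given to player j). *)
Definition tft_state (R : realType) (n : nat) : Type :=
  (('I_n -> R) * ('I_n -> 'I_n -> R))%type.

Definition tft_step (R : realType) (n : nat) (v : 'I_n -> R)
  (s : tft_state R n) : tft_state R n :=
  let x := s.1 in let y := s.2 in
  (* w i j = y j i * x j : amount of good j received by player i *)
  let w := fun i j => y j i * x j in
  let x' := fun i => \sum_(j < n) v j * w i j in
  (x', fun i j => v j * w i j / x' i).

Fixpoint tft (R : realType) (n : nat) (v : 'I_n -> R)
  (x0 : 'I_n -> R) (y0 : 'I_n -> 'I_n -> R) (t : nat) : tft_state R n :=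
  match t with
  | 0 => (x0, y0)
  | t'.+1 => tft_step v (tft v x0 y0 t')
  end.

Definition tft_x (R : realType) (n : nat) (v : 'I_n -> R)
  (x0 : 'I_n -> R) (y0 : 'I_n -> 'I_n -> R) (t : nat) (i : 'I_n) : R :=
  (tft v x0 y0 t).1 i.

(* v^* = max_j v_j (the default 0 is irrelevant as n >= 1 and v > 0). *)
Definition vmax (R : realType) (n : nat) (v : 'I_n -> R) : R :=
  \big[Num.max/0]_(j < n) v j.

(** Let z_ij(t) = y_ij(t) x_i(t) be what player i gives player j at time t.
    The exchange and update rules say exactly that z_ij(t+1) = v_j z_ji(t):
    each player returns, as the new gift, the value it produced from the
    partner's last gift.  Hence z_ij(t+2) = v_i v_j z_ij(t), and
    x_i(t) = sum_j z_ij(t) = sum_j (v_i v_j)^(t/2) z_ij(t mod 2).  The term of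
    a player j with v_j = v* dominates this sum, which gives the two-sided
    bound with ratio v_i v*; the limits follow from it. *)

From HB Require Import structures.
From mathcomp Require Import all_boot all_order all_algebra.
From mathcomp Require Import all_classical all_reals all_analysis.
Import Order.TTheory GRing.Theory Num.Theory.
Set Implicit Arguments.
Unset Strict Implicit.
Local Open Scope classical_set_scope.
Local Open Scope ring_scope.

Lemma cvgn_half : half @ \oo --> \oo.
Proof. by under [half]funext => t do rewrite -divn2; exact: cvg_divnr. Qed.

Section GeometricHalf.
Variable R : realType.
Implicit Types (u : R^nat) (c d q : R).

Lemma cvgy_expr q : 1 < q -> (GRing.exp q : R^nat) @ \oo --> +oo.
Proof.
move=> q_gt1; have q_gt0 : 0 < q by exact: lt_trans q_gt1.
have -> : GRing.exp q = fun k => (q^-1 ^+ k)^-1.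
  by apply/funext => k; rewrite exprVn invrK.
apply/(cvgrVy (f := GRing.exp q^-1)).
  by apply: nearW => k; rewrite exprn_gt0 ?invr_gt0.
by apply: cvg_expr; rewrite gtr0_norm ?invr_gt0 // invf_lt1.
Qed.

Lemma cvgy_ge_expr_half u c q : 0 < c -> 1 < q ->
  (forall t, c * q ^+ t./2 <= u t) -> u @ \oo --> +oo.
Proof.
move=> c_gt0 q_gt1 u_ge; apply: (@ger_cvgy _ _ _ _ (fun t => c * q ^+ t./2)).
  by apply: nearW.
apply/cvgryPge => A.
have /cvgryPge /(_ (A / c)) := cvg_comp _ _ cvgn_half (cvgy_expr q_gt1).
by apply: filterS => t /=; rewrite ler_pdivrMr // mulrC.
Qed.

Lemma cvg0_le_expr_half u d q : 0 <= q < 1 ->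
  (forall t, 0 <= u t <= d * q ^+ t./2) -> u @ \oo --> 0.
Proof.
move=> /andP[q_ge0 q_lt1] u_bnd.
have dq_cvg0 : (fun t => d * q ^+ t./2) @ \oo --> 0.
  rewrite -(mulr0 d); apply: cvgMl_tmp.
  by apply: (cvg_comp _ _ cvgn_half); apply: cvg_expr; rewrite ger0_norm.
apply: (@squeeze_cvgr _ _ _ _ (cst 0) (fun t => d * q ^+ t./2)) dq_cvg0.
- exact: nearW.
- exact: (cvg_cst (0 : R^o)).
Qed.

End GeometricHalf.

Lemma sum_exprM_bounds (R : realDomainType) (I : finType) (p w : I -> R)
    (m : I) (k : nat) :
  (forall j, 0 <= p j <= p m) -> (forall j, 0 <= w j) ->
  p m ^+ k * w m <= \sum_j p j ^+ k * w j <= p m ^+ k * \sum_j w j.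
Proof.
move=> p_bnd w_ge0; have p_ge0 j : 0 <= p j by case/andP: (p_bnd j).
apply/andP; split.
  rewrite (bigD1 m) //= lerDl; apply: sumr_ge0 => j _.
  by rewrite mulr_ge0 ?exprn_ge0.
rewrite mulr_sumr; apply: ler_sum => j _; apply: ler_wpM2r => //.
by apply: lerXn2r; rewrite ?nnegrE //; case/andP: (p_bnd j).
Qed.

Lemma vmax_ub (R : realType) (n : nat) (v : 'I_n -> R) j : v j <= vmax v.
Proof. exact: le_bigmax. Qed.

Lemma vmax_attained (R : realType) (n : nat) (v : 'I_n -> R) (i : 'I_n) :
  (forall j, 0 <= v j) -> exists m, vmax v = v m.
Proof.
move=> v_ge0; have [m _ vmE] := eq_bigmax i xpredT v isT (fun j _ => v_ge0 j).
by exists m.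
Qed.

Section TitForTat.
Variables (R : realType) (n : nat) (v : 'I_n -> R).
Variables (x0 : 'I_n -> R) (y0 : 'I_n -> 'I_n -> R).
Hypothesis v_gt0 : forall j, 0 < v j.
Hypothesis x0_gt0 : forall i, 0 < x0 i.
Hypothesis y0_gt0 : forall i j, 0 < y0 i j.
Hypothesis y0_sum1 : forall i, \sum_(j < n) y0 i j = 1.

Local Notation x t := (tft v x0 y0 t).1.
Local Notation y t := (tft v x0 y0 t).2.

Fixpoint tft_gift (t : nat) (i j : 'I_n) : R :=
  if t is t'.+1 then v j * tft_gift t' j i else y0 i j * x0 i.

Lemma tft_gift_gt0 t i j : 0 < tft_gift t i j.
Proof. by elim: t i j => [|t IHt] i j /=; apply: mulr_gt0. Qed.

Lemma sum_tft_gift_gt0 t i : 0 < \sum_j tft_gift t i j.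
Proof.
rewrite (bigD1 i) //= ltr_pwDl ?tft_gift_gt0 //.
by apply: sumr_ge0 => j _; exact/ltW/tft_gift_gt0.
Qed.

Lemma tft_gift_double k b i j :
  tft_gift (k.*2 + b) i j = (v i * v j) ^+ k * tft_gift b i j.
Proof.
elim: k => [|k IHk]; first by rewrite mul1r.
by rewrite doubleS !addSn /= IHk exprS mulrCA !mulrA.
Qed.

Lemma tft_x_succE t i :
  (forall i j, y t i j * x t i = tft_gift t i j) ->
  x t.+1 i = \sum_j tft_gift t.+1 i j.
Proof. by move=> yxE; apply: eq_bigr => j _ /=; rewrite yxE. Qed.

Lemma tft_giftE t i j : y t i j * x t i = tft_gift t i j.
Proof.
elim: t i j => [//|t IHt] i j.
have x_neq0 : x t.+1 i != 0.
  by rewrite (tft_x_succE _ IHt) gt_eqF ?sum_tft_gift_gt0.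
by move: x_neq0 => /= /divfK ->; rewrite IHt.
Qed.

Lemma tft_xE t i : tft_x v x0 y0 t i = \sum_j tft_gift t i j.
Proof.
case: t => [|t]; last exact/tft_x_succE/tft_giftE.
by rewrite /tft_x /= -mulr_suml y0_sum1 mul1r.
Qed.

Lemma tft_x_half t i :
  tft_x v x0 y0 t i = \sum_j (v i * v j) ^+ t./2 * tft_gift (odd t) i j.
Proof.
rewrite tft_xE; apply: eq_bigr => j _.
by rewrite -tft_gift_double addnC odd_double_half.
Qed.

Lemma tft_x_gt0 t i : 0 < tft_x v x0 y0 t i.
Proof. by rewrite tft_xE sum_tft_gift_gt0. Qed.

Lemma tft_x_bounds i : exists c d : R, 0 < c /\ 0 < d /\
  forall t, c * (v i * vmax v) ^+ t./2 <= tft_x v x0 y0 t i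
                                     <= d * (v i * vmax v) ^+ t./2.
Proof.
have [m vmE] := vmax_attained i (fun j => ltW (v_gt0 j)).
pose c := Num.min (tft_gift 0 i m) (tft_gift 1 i m).
pose d := \sum_j tft_gift 0 i j + \sum_j tft_gift 1 i j.
exists c, d; split; first by rewrite lt_min !tft_gift_gt0.
split; first by rewrite addr_gt0 ?sum_tft_gift_gt0.
move=> t; rewrite tft_x_half vmE.
have q_ge0 : 0 <= (v i * v m) ^+ t./2 by rewrite exprn_ge0 // mulr_ge0 ?ltW.
have c_le (b : bool) : c <= tft_gift b i m.
  by case: b; rewrite /c ge_min lexx ?orbT.
have sum_le (b : bool) : \sum_j tft_gift b i j <= d.
  by case: b; rewrite /d ?lerDl ?lerDr; apply/ltW/sum_tft_gift_gt0.
have p_bnd j : 0 <= v i * v j <= v i * v m.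
  have v_ge0 k : 0 <= v k by exact: ltW.
  by rewrite mulr_ge0 // ler_wpM2l // -vmE vmax_ub.
have w_ge0 j : 0 <= tft_gift (odd t) i j by exact/ltW/tft_gift_gt0.
have /andP[lb ub] := sum_exprM_bounds t./2 p_bnd w_ge0.
apply/andP; split.
  by apply: le_trans lb; rewrite mulrC ler_wpM2l.
by apply: le_trans ub _; rewrite mulrC ler_wpM2r.
Qed.

End TitForTat.

Theorem theorem1 (R : realType) (n : nat) (v : 'I_n -> R)
  (x0 : 'I_n -> R) (y0 : 'I_n -> 'I_n -> R) :
  (0 < n)%N ->
  (forall j, 0 < v j) ->
  (forall i, 0 < x0 i) ->
  (forall i j, 0 < y0 i j) ->
  (forall i, \sum_(j < n) y0 i j = 1) ->
  forall i : 'I_n,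
    (exists c d : R, 0 < c /\ 0 < d /\
       forall t : nat,
         c * (v i * vmax v) ^+ t./2 <= tft_x v x0 y0 t i /\
         tft_x v x0 y0 t i <= d * (v i * vmax v) ^+ t./2) /\
    (v i > (vmax v)^-1 -> (fun t => tft_x v x0 y0 t i) @ \oo --> +oo) /\
    (v i < (vmax v)^-1 -> (fun t => tft_x v x0 y0 t i) @ \oo --> 0) /\
    (v i = (vmax v)^-1 -> exists m M : R, 0 < m /\ 0 < M /\
       forall t : nat, m <= tft_x v x0 y0 t i <= M).
Proof.
move=> _ v_gt0 x0_gt0 y0_gt0 y0_sum1 i.
have [c [d [c_gt0 [d_gt0 x_bnd]]]] :=
  tft_x_bounds v_gt0 x0_gt0 y0_gt0 y0_sum1 i.
have x_gt0 t := tft_x_gt0 v_gt0 x0_gt0 y0_gt0 y0_sum1 t i.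
have vmax_gt0 : 0 < vmax v.
  by have [m ->] := vmax_attained i (fun j => ltW (v_gt0 j)).
have q_gt0 : 0 < v i * vmax v by rewrite mulr_gt0.
have qE : v i * vmax v = v i / (vmax v)^-1 by rewrite invrK.
split; first by exists c, d; do 2!split=> //; move=> t; apply/andP.
split=> [vi_gt|]; last split=> [vi_lt|vi_eq].
- apply: (cvgy_ge_expr_half (q := v i * vmax v) c_gt0) => [|t].
    by rewrite qE ltr_pdivlMr ?invr_gt0 // mul1r.
  by case/andP: (x_bnd t).
- apply: (cvg0_le_expr_half (d := d) (q := v i * vmax v)) => [|t].
    by rewrite (ltW q_gt0) qE ltr_pdivrMr ?invr_gt0 // mul1r.
  by rewrite (ltW (x_gt0 t)); case/andP: (x_bnd t).
- exists c, d; do 2!split=> //; move=> t.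
  by have := x_bnd t; rewrite vi_eq mulVf ?gt_eqF // expr1n !mulr1.
Qed.
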